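(* Let $n>1$, let $D$ be a set, let $f:\mathcal{S}^n\to D$ be a multidimensional rightward function, and let $\odot:D\times D\to D$ be a binary operator. The following are equivalent: (1) $f$ is $\odot$-homomorphic; (2) $f$ is memoryless, witnessed by some rightward or leftward $g:\mathcal{S}^{n-1}\to D$ and some $\oplus:D\times D\to D$ with $f(\sigma\bullet[\delta])=f(\sigma)\oplus g(\delta)$ for all $\sigma\in\mathcal{S}^n,\delta\in\mathcal{S}^{n-1}$, and the summarized version $h:\mathcal{S}_D\to D$ of $f$, defined by $h([])=f([])$ and $h(x\bullet[a])=h(x)\oplus a$ for all $x\in\mathcal{S}_D,a\in D$, is $\odot$-homomorphic.
   Context: $\mathit{Sc}$ is a set of scalars. $\mathcal{S}^0=\mathit{Sc}$ and, for $n\ge1$, $\mathcal{S}^n$ is the set of finite sequences of elements of $\mathcal{S}^{n-1}$; $\mathcal{S}_D$ is the set of finite sequences over $D$; $\bullet$ is concatenation, $[]$ the empty sequence, $[a]$ a one-element sequence. A function $g$ on sequences is rightward if there is an operator $\oplus'$ with $g(x\bullet[a])=g(x)\oplus' a$ for all $x,a$; leftward if there is $\otimes'$ with $g([a]\bullet x)=a\otimes' g(x)$. A function $f:\mathcal{S}^n\to D$ ($n>1$) is multidimensional rightward if there exist a family $\mathbb{G}:D\to(\mathcal{S}^{n-1}\to D)$ of rightward (or leftward) functions and an operator $\otimes:D\times D\to D$ such that $f(\sigma\bullet[\delta])=f(\sigma)\otimes\mathbb{G}(f(\sigma))(\delta)$ for all $\sigma\in\mathcal{S}^n,\delta\in\mathcal{S}^{n-1}$.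 A function $F$ on sequences is $\odot$-homomorphic if $F(x\bullet y)=F(x)\odot F(y)$ for all $x,y$. *)

From mathcomp Require Import all_boot.
Set Implicit Arguments. Unset Strict Implicit. Unset Printing Implicit Defensive.

Fixpoint Sn (Sc : Type) (n : nat) : Type :=
  match n with 0 => Sc | n'.+1 => seq (Sn Sc n') end.

Definition rightward (A D : Type) (g : seq A -> D) : Prop :=
  exists op : D -> A -> D, forall x a, g (rcons x a) = op (g x) a.

Definition leftward (A D : Type) (g : seq A -> D) : Prop :=
  exists op : A -> D -> D, forall x a, g (a :: x) = op a (g x).

Definition homomorphic (A D : Type) (odot : D -> D -> D) (F : seq A -> D) : Prop :=
  forall x y, F (x ++ y) = odot (F x) (F y).

Definition md_rightward (Sc D : Type) (k : nat) (f : Sn Sc k.+2 -> D) : Prop :=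
  exists (G : D -> Sn Sc k.+1 -> D) (otimes : D -> D -> D),
    ((forall d, rightward (G d)) \/ (forall d, leftward (G d))) /\
    forall (sigma : Sn Sc k.+2) (delta : Sn Sc k.+1),
      f (rcons sigma delta) = otimes (f sigma) (G (f sigma) delta).

Definition memoryless_with (Sc D : Type) (k : nat) (f : Sn Sc k.+2 -> D)
    (g : Sn Sc k.+1 -> D) (oplus : D -> D -> D) : Prop :=
  (rightward g \/ leftward g) /\
  forall (sigma : Sn Sc k.+2) (delta : Sn Sc k.+1),
    f (rcons sigma delta) = oplus (f sigma) (g delta).

Definition summarized (Sc D : Type) (k : nat) (f : Sn Sc k.+2 -> D)
    (oplus : D -> D -> D) : seq D -> D :=
  foldl oplus (f [::]).

Lemma summarized_nil Sc D k (f : Sn Sc k.+2 -> D) oplus :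
  summarized f oplus [::] = f [::].
Proof. by []. Qed.

Lemma summarized_rcons Sc D k (f : Sn Sc k.+2 -> D) oplus x a :
  summarized f oplus (rcons x a) = oplus (summarized f oplus x) a.
Proof. by rewrite /summarized -cats1 foldl_cat. Qed.

From mathcomp Require Import all_boot.
From Stdlib Require Import ClassicalEpsilon.

Set Implicit Arguments.
Unset Strict Implicit.
Unset Printing Implicit Defensive.

(* If f is memoryless with witnesses g and (+), then f s = h (map g s) for
   the summarized version h, so f inherits homomorphy from h.  Conversely, if
   f is homomorphic then f (σ • [δ]) = f σ ⊙ f [δ], and by the recursion of a
   multidimensional rightward function f [δ] = f [] ⊗ G (f []) δ depends on δ
   only through g := G (f []).  Choosing a preimage c b of every value b of g,
   the operator u (+) b := u ⊙ f [c b] witnesses memorylessness, and the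
   summarized version is h x = f (map c x), again a homomorphism. *)

Section FoldlOfRcons.

Variables (A B D : Type) (F : seq A -> D) (op : D -> B -> D) (g : A -> B).

Lemma foldl_map_of_rcons :
  (forall s a, F (rcons s a) = op (F s) (g a)) ->
  forall s, F s = foldl op (F [::]) (map g s).
Proof.
move=> F_rcons; elim/last_ind => [//|s a IHs].
by rewrite F_rcons map_rcons -cats1 foldl_cat -IHs.
Qed.

End FoldlOfRcons.

Section HomomorphicSection.

Variables (A B D : Type) (odot : D -> D -> D) (F : seq A -> D).
Variables (g : A -> B) (c : B -> A).
Hypothesis F_hom : homomorphic odot F.

Let oplus (u : D) (b : B) : D := odot u (F [:: c b]).

Lemma foldl_section x : foldl oplus (F [::]) x = F (map c x).
Proof.
have F_rcons s b : F (map c (rcons s b)) = oplus (F (map c s)) b.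
  by rewrite map_rcons -cats1 F_hom.
by rewrite [RHS](@foldl_map_of_rcons _ _ _ (F \o map c) oplus id F_rcons) map_id.
Qed.

Lemma homomorphic_foldl_section : homomorphic odot (foldl oplus (F [::])).
Proof. by move=> x y; rewrite !foldl_section map_cat F_hom. Qed.

Lemma homomorphic_rcons_section :
  (forall a, F [:: c (g a)] = F [:: a]) ->
  forall s a, F (rcons s a) = oplus (F s) (g a).
Proof. by move=> F1_g s a; rewrite -cats1 F_hom /oplus F1_g. Qed.

End HomomorphicSection.

Definition preimage_pick (A B : Type) (a0 : A) (g : A -> B) (b : B) : A :=
  epsilon (inhabits a0) (fun a => g a = b).

Lemma preimage_pickK (A B : Type) (a0 : A) (g : A -> B) a :
  g (preimage_pick a0 g (g a)) = g a.
Proof. by apply: (epsilon_spec (inhabits a0) (fun a' => g a' = g a)); exists a. Qed.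

(* n = k.+2, i.e. ranges over all n > 1; S^(n-1) = Sn Sc k.+1 *)
Theorem theorem4p7 (Sc D : Type) (k : nat)
    (f : Sn Sc k.+2 -> D) (Hf : md_rightward f) (odot : D -> D -> D) :
  homomorphic odot f <->
  exists (g : Sn Sc k.+1 -> D) (oplus : D -> D -> D),
    memoryless_with f g oplus /\ homomorphic odot (summarized f oplus).
Proof.
split=> [f_hom | [g [oplus [[_ f_rcons] h_hom]]]].
- have [G [otimes [G_dir f_rec]]] := Hf.
  pose g := G (f [::]); pose c := preimage_pick [::] g.
  have f1 δ : f [:: δ] = otimes (f [::]) (g δ) := f_rec [::] δ.
  have f1_g δ : f [:: c (g δ)] = f [:: δ] by rewrite !f1 preimage_pickK.
  exists g, (fun u b => odot u (f [:: c b])); split; last first.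
    exact: (homomorphic_foldl_section c f_hom).
  split; first by case: G_dir => G_dir; [left | right]; apply: G_dir.
  exact: (homomorphic_rcons_section f_hom f1_g).
- have f_summarized s : f s = summarized f oplus (map g s).
    exact: (foldl_map_of_rcons f_rcons s).
  by move=> x y; rewrite !f_summarized map_cat h_hom.
Qed.
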